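(* Let $c\geq 0$ and let $n>c$ be a real number. For $k\in\mathbb{N}_0$ and $x\geq 0$ let $$p_{n,k}^{[c]}(x)=(-1)^k\binom{-n/c}{k}(cx)^k(1+cx)^{-\frac{n}{c}-k}\ \text{ if } c>0,\qquad p_{n,k}^{[0]}(x)=\frac{(nx)^k}{k!}e^{-nx}.$$ Then the Shannon entropy $$H_{n,c}(x)=-\sum_{k=0}^\infty p_{n,k}^{[c]}(x)\log p_{n,k}^{[c]}(x)$$ is concave and increasing on $[0,+\infty)$.
   Context: For $\alpha\in\mathbb{R}$ and $k\in\mathbb{N}$, $\binom{\alpha}{k}=\frac{\alpha(\alpha-1)\cdots(\alpha-k+1)}{k!}$ and $\binom{\alpha}{0}=1$. For each $x\geq0$, $(p_{n,k}^{[c]}(x))_{k\geq 0}$ is a probability distribution (negative binomial type for $c>0$, Poisson for $c=0$), with the convention $0\log 0=0$. *)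

From Stdlib Require Import Reals Factorial.
From Coquelicot Require Import Coquelicot.
Open Scope R_scope.

Fixpoint falling (a : R) (k : nat) : R :=
  match k with
  | O => 1
  | S k' => falling a k' * (a - INR k')
  end.

Definition gbinom (a : R) (k : nat) : R := falling a k / INR (Factorial.fact k).

Definition p_nk (c n : R) (k : nat) (x : R) : R :=
  if Rlt_dec 0 c then
    (-1) ^ k * gbinom (- n / c) k * (c * x) ^ k
      * Rpower (1 + c * x) (- n / c - INR k)
  else
    (n * x) ^ k / INR (Factorial.fact k) * exp (- n * x).

Definition xlogx (t : R) : R := if Rle_dec t 0 then 0 else t * ln t.

Definition ent_term (c n x : R) (k : nat) : R := - xlogx (p_nk c n k x).
Definition H_ent (c n x : R) : R := Series (ent_term c n x).

(* Put r = n/c, u = c x and q = u/(1+u). Then p_k = (1+u)^(-r) b_r(k) q^k with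
   b_r(k) = r(r+1)...(r+k-1)/k! (for c = 0, p_k = e^(-l) l^k/k! with l = n x), and
   expanding -log p_k writes the entropy as E[gamma] plus an elementary function of u,
   where E is the expectation under p and gamma_k = -log b_r(k) (resp. log k!).
   Differentiating a negative binomial expectation gives d/du E_r[g] = r E_(r+1)[Delta g]
   (for Poisson, d/dl E[g] = E[Delta g]), so H' and H'' are expectations of Delta gamma and
   Delta^2 gamma plus elementary terms.  The inequality log y <= y - 1 bounds Delta gamma
   from below and Delta^2 gamma from above by rational functions of k whose expectations
   are explicit, giving H' > 0 and H'' <= 0 on (0, +oo); continuity at 0 then yields
   concavity and strict monotonicity on [0, +oo). *)

From Stdlib Require Import Reals Lra Psatz Factorial.
From Coquelicot Require Import Coquelicot.
Open Scope R_scope.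

Lemma ln_le_sub_1 y : 0 < y -> ln y <= y - 1.
Proof.
  intros Hy. rewrite <- (ln_exp (y - 1)).
  apply ln_le; [exact Hy | pose proof (exp_ineq1_le (y - 1)); lra].
Qed.

Lemma ln_sub_ln_le a b : 0 < a -> 0 < b -> ln a - ln b <= a / b - 1.
Proof.
  intros Ha Hb. rewrite <- ln_div by assumption.
  apply ln_le_sub_1, Rdiv_lt_0_compat; assumption.
Qed.

Lemma Rpower_opp_succ x s : 0 < x -> Rpower x (- (s + 1)) = Rpower x (- s) / x.
Proof.
  intros Hx. replace (- (s + 1)) with (- s + - (1)) by ring.
  rewrite Rpower_plus, (Rpower_Ropp x 1), Rpower_1 by exact Hx. reflexivity.
Qed.

Lemma is_derive_Rmult (f g : R -> R) (x df dg : R) : is_derive f x df -> is_derive g x dg ->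
  is_derive (fun y => f y * g y) x (df * g x + f x * dg).
Proof. intros Hf Hg. apply (is_derive_mult f g); [exact Hf | exact Hg | intros; apply Rmult_comm]. Qed.

Lemma continuity_pt_of_is_derive (f : R -> R) (x l : R) : is_derive f x l -> continuity_pt f x.
Proof. intros H. apply derivable_continuous_pt. exists l. apply is_derive_Reals, H. Qed.

Lemma affine_of_is_derive_const (f : R -> R) (d u : R) : 0 <= u ->
  (forall x, 0 <= x -> is_derive f x d) -> f u = f 0 + d * u.
Proof.
  intros Hu Hd. destruct (Rle_lt_or_eq_dec 0 u Hu) as [Hu' | <-]; [| ring].
  destruct (MVT_cor2 f (fun _ => d) 0 u Hu') as [c [E _]].
  - intros c Hc. apply is_derive_Reals, Hd. lra.
  - lra.
Qed.

Lemma continue_in_Rplus_0 (f : R -> R) : continuity_pt f 0 -> continue_in f (fun x => 0 <= x) 0.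
Proof.
  intros H. apply (limit1_imp f (D_x no_cond 0)); [| exact H].
  intros x [_ Hx]. split; [exact I | exact Hx].
Qed.

Lemma nonpos_of_continue_in_Rplus_0 (g : R -> R) (a : R) : 0 < a ->
  continue_in g (fun x => 0 <= x) 0 -> (forall x, 0 < x < a -> g x <= 0) -> g 0 <= 0.
Proof.
  intros Ha Hg Hneg. apply Rnot_lt_le. intros Hpos.
  destruct (Hg (g 0) Hpos) as [d [Hd Hclose]].
  set (x := Rmin d a / 2).
  assert (Hx : 0 < x < Rmin d a) by (unfold x; pose proof (Rmin_glb_lt d a 0 Hd Ha); lra).
  pose proof (Rmin_l d a). pose proof (Rmin_r d a).
  assert (Hgx : g x <= 0) by (apply Hneg; lra).
  specialize (Hclose x). simpl in Hclose. unfold R_dist in Hclose.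
  rewrite Rminus_0_r, Rabs_pos_eq in Hclose by lra.
  assert (Habs : Rabs (g x - g 0) < g 0) by (apply Hclose; repeat split; lra).
  apply Rabs_def2 in Habs. lra.
Qed.

Lemma continue_in_xlnx_0 : continue_in (fun u => u * ln u) (fun u => 0 <= u) 0.
Proof.
  intros eps Heps. exists (Rmin 1 ((eps / 2) ^ 2)). split.
  { apply Rmin_glb_lt; [lra | apply pow_lt; lra]. }
  intros x [[Hx Hx0] Hxd].
  pose proof (Rmin_l 1 ((eps / 2) ^ 2)). pose proof (Rmin_r 1 ((eps / 2) ^ 2)).
  simpl in *. unfold R_dist in *.
  assert (Hxpos : 0 < x) by (destruct (Rle_lt_or_eq_dec 0 x Hx); [assumption | congruence]).
  rewrite Rminus_0_r, Rabs_pos_eq in Hxd by lra.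
  rewrite Rmult_0_l, Rminus_0_r.
  (* with t = sqrt x: -x ln x = 2 t^2 (- ln t) <= 2 t^2 (1/t - 1) < 2 t < eps *)
  set (t := sqrt x). assert (Ht : 0 < t) by (apply sqrt_lt_R0; lra).
  assert (Htt : t * t = x) by (apply sqrt_sqrt; lra).
  assert (Hlnx : ln x = 2 * ln t) by (rewrite <- Htt, ln_mult by assumption; ring).
  assert (Hlnt : - ln t <= / t - 1).
  { rewrite <- ln_Rinv by assumption. apply ln_le_sub_1, Rinv_0_lt_compat, Ht. }
  assert (Hlnx0 : ln x <= 0) by (rewrite <- ln_1; apply ln_le; lra).
  assert (Hteps : t < eps / 2).
  { apply Rnot_le_lt. intros Hle. assert ((eps / 2) ^ 2 <= x) by (rewrite <- Htt; simpl; nra). lra. }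
  rewrite Rabs_left1 by (apply Rmult_le_0_l; lra).
  assert (Hbound : t * t * - ln t <= t - t * t).
  { replace (t - t * t) with (t * t * (/ t - 1)) by (field; lra).
    apply Rmult_le_compat_l; nra. }
  rewrite Hlnx, <- Htt. nra.
Qed.

Lemma is_series_zero : is_series (fun _ : nat => 0) 0.
Proof.
  apply is_series_Reals. intros eps Heps. exists 0%nat. intros k _.
  rewrite sum_cte, Rmult_0_l. unfold Rdist. rewrite Rminus_0_r, Rabs_R0. exact Heps.
Qed.

Lemma is_series_ext_R (a b : nat -> R) l : (forall k, a k = b k) -> is_series a l -> is_series b l.
Proof. apply is_series_ext. Qed.

Lemma is_series_lin3 (X Y Z : nat -> R) lx ly lz a b :
  is_series X lx -> is_series Y ly -> is_series Z lz ->
  is_series (fun k => X k + a * Y k + b * Z k) (lx + a * ly + b * lz).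
Proof.
  intros HX HY HZ.
  exact (is_series_plus _ _ _ _ (is_series_plus _ _ _ _ HX (is_series_scal_l a _ _ HY))
           (is_series_scal_l b _ _ HZ)).
Qed.

(** * Concave increasing functions on [0, +oo) *)

Definition concave_on_Rplus (f : R -> R) : Prop :=
  forall x y t, 0 <= x -> 0 <= y -> 0 <= t <= 1 ->
    t * f x + (1 - t) * f y <= f (t * x + (1 - t) * y).

Definition strict_incr_on_Rplus (f : R -> R) : Prop :=
  forall x y, 0 <= x -> x < y -> f x < f y.

Lemma concave_on_Rplus_scale (f phi : R -> R) (a : R) : 0 < a ->
  (forall x, 0 <= x -> f x = phi (a * x)) -> concave_on_Rplus phi -> concave_on_Rplus f.
Proof.
  intros Ha Hf Hphi x y t Hx Hy Ht. rewrite !Hf by nra.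
  replace (a * (t * x + (1 - t) * y)) with (t * (a * x) + (1 - t) * (a * y)) by ring.
  apply Hphi; nra.
Qed.

Lemma strict_incr_on_Rplus_scale (f phi : R -> R) (a : R) : 0 < a ->
  (forall x, 0 <= x -> f x = phi (a * x)) -> strict_incr_on_Rplus phi -> strict_incr_on_Rplus f.
Proof. intros Ha Hf Hphi x y Hx Hxy. rewrite !Hf by lra. apply Hphi; nra. Qed.

Lemma concave_chord (f df : R -> R) (x y t : R) :
  (forall z, x <= z <= y -> is_derive f z (df z)) ->
  (forall z w, x <= z -> z <= w -> w <= y -> df w <= df z) ->
  x < y -> 0 < t < 1 -> t * f x + (1 - t) * f y <= f (t * x + (1 - t) * y).
Proof.
  intros Hf Hdecr Hxy Ht. set (z := t * x + (1 - t) * y).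
  assert (Hxz : x < z) by (unfold z; nra). assert (Hzy : z < y) by (unfold z; nra).
  destruct (MVT_cor2 f df x z Hxz) as [c1 [E1 Hc1]].
  { intros c Hc. apply is_derive_Reals, Hf. lra. }
  destruct (MVT_cor2 f df z y Hzy) as [c2 [E2 Hc2]].
  { intros c Hc. apply is_derive_Reals, Hf. lra. }
  replace (z - x) with ((1 - t) * (y - x)) in E1 by (unfold z; ring).
  replace (y - z) with (t * (y - x)) in E2 by (unfold z; ring).
  assert (0 <= t * (1 - t) * (y - x) * (df c1 - df c2)).
  { assert (df c2 <= df c1) by (apply Hdecr; lra). repeat apply Rmult_le_pos; nra. }
  nra.
Qed.

Section ConcaveIncreasing.

Variables f df ddf : R -> R.
Hypothesis f_derive : forall x, 0 < x -> is_derive f x (df x).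
Hypothesis df_derive : forall x, 0 < x -> is_derive df x (ddf x).
Hypothesis ddf_nonpos : forall x, 0 < x -> ddf x <= 0.
Hypothesis df_pos : forall x, 0 < x -> 0 < df x.
Hypothesis f_right_cont : continue_in f (fun x => 0 <= x) 0.

Lemma df_decr x y : 0 < x -> x <= y -> df y <= df x.
Proof.
  intros Hx Hxy. destruct (Rle_lt_or_eq_dec x y Hxy) as [Hlt | <-]; [| lra].
  destruct (MVT_cor2 df ddf x y Hlt) as [c [E Hc]].
  { intros c Hc. apply is_derive_Reals, df_derive. lra. }
  assert (ddf c <= 0) by (apply ddf_nonpos; lra). nra.
Qed.

Lemma f_strict_incr_pos x y : 0 < x -> x < y -> f x < f y.
Proof.
  intros Hx Hxy. apply (incr_function f 0 p_infty df); simpl; try easy.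
  - intros z Hz _. apply f_derive, Hz.
  - intros z Hz _. apply Rlt_gt, df_pos, Hz.
Qed.

Lemma f_concave_pos x y t : 0 < x -> 0 < y -> 0 <= t <= 1 ->
  t * f x + (1 - t) * f y <= f (t * x + (1 - t) * y).
Proof.
  intros Hx Hy Ht.
  assert (Hchord : forall a b s, 0 < a -> a < b -> 0 < s < 1 ->
            s * f a + (1 - s) * f b <= f (s * a + (1 - s) * b)).
  { intros a b s Ha Hab Hs. apply (concave_chord f df); try assumption.
    - intros z Hz. apply f_derive. lra.
    - intros z w Hz Hzw _. apply df_decr; lra. }
  destruct (Req_dec t 0) as [-> | Ht0].
  { replace (0 * x + (1 - 0) * y) with y by ring. lra. }
  destruct (Req_dec t 1) as [-> | Ht1].
  { replace (1 * x + (1 - 1) * y) with x by ring. lra. }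
  destruct (Rtotal_order x y) as [Hxy | [<- | Hxy]].
  - apply Hchord; lra.
  - replace (t * x + (1 - t) * x) with x by ring. lra.
  - replace (t * x + (1 - t) * y) with ((1 - t) * y + (1 - (1 - t)) * x) by ring.
    replace (t * f x + (1 - t) * f y) with ((1 - t) * f y + (1 - (1 - t)) * f x) by ring.
    apply Hchord; lra.
Qed.

Lemma f_concave_0 y t : 0 < y -> 0 <= t <= 1 ->
  t * f 0 + (1 - t) * f y <= f (t * 0 + (1 - t) * y).
Proof.
  intros Hy Ht. destruct (Req_dec t 1) as [-> | Ht1].
  { replace (1 * 0 + (1 - 1) * y) with 0 by ring. lra. }
  set (g := fun e => t * f e + (1 - t) * f y - f (t * e + (1 - t) * y)).
  enough (g 0 <= 0) by (unfold g in *; lra).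
  apply (nonpos_of_continue_in_Rplus_0 g y Hy).
  - unfold g. apply limit_minus; [apply limit_plus |].
    + apply limit_mul; [apply (limit_free (fun _ => t) _ 0 0) | exact f_right_cont].
    + apply (limit_free (fun _ => (1 - t) * f y) _ 0 0).
    + apply continue_in_Rplus_0, (continuity_pt_comp (fun e => t * e + (1 - t) * y) f).
      * apply continuity_pt_of_is_derive with t. auto_derive; [exact I | ring].
      * apply continuity_pt_of_is_derive with (df (t * 0 + (1 - t) * y)), f_derive. nra.
  - intros x Hx. unfold g. pose proof (f_concave_pos x y t ltac:(lra) Hy Ht). lra.
Qed.

Lemma concave_on_Rplus_of_derive2 : concave_on_Rplus f.
Proof.
  intros x y t Hx Hy Ht.
  destruct (Rle_lt_or_eq_dec 0 x Hx) as [Hx' | <-];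
  destruct (Rle_lt_or_eq_dec 0 y Hy) as [Hy' | <-].
  - apply f_concave_pos; assumption.
  - replace (t * x + (1 - t) * 0) with ((1 - t) * 0 + (1 - (1 - t)) * x) by ring.
    replace (t * f x + (1 - t) * f 0) with ((1 - t) * f 0 + (1 - (1 - t)) * f x) by ring.
    apply f_concave_0; lra.
  - apply f_concave_0; assumption.
  - replace (t * 0 + (1 - t) * 0) with 0 by ring. lra.
Qed.

Lemma strict_incr_on_Rplus_of_derive : strict_incr_on_Rplus f.
Proof.
  intros x y Hx Hxy. destruct (Rle_lt_or_eq_dec 0 x Hx) as [Hx' | <-].
  { apply f_strict_incr_pos; assumption. }
  assert (f 0 <= f (y / 2)).
  { apply Rminus_le.
    apply (nonpos_of_continue_in_Rplus_0 (fun e => f e - f (y / 2)) (y / 2)); [lra | |].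
    - apply limit_minus; [exact f_right_cont | apply (limit_free (fun _ => f (y / 2)) _ 0 0)].
    - intros e He. pose proof (f_strict_incr_pos e (y / 2) ltac:(lra) ltac:(lra)). lra. }
  pose proof (f_strict_incr_pos (y / 2) y ltac:(lra) ltac:(lra)). lra.
Qed.

End ConcaveIncreasing.

Definition delta (g : nat -> R) (k : nat) : R := g (S k) - g k.

Definition quad_growth (g : nat -> R) : Prop :=
  exists C, forall k, Rabs (g k) <= C * (INR k + 1) ^ 2.

Lemma quad_growth_of_bounded g M : (forall k, Rabs (g k) <= M) -> quad_growth g.
Proof.
  intros H. exists M. intros k. pose proof (pos_INR k). specialize (H k).
  pose proof (Rabs_pos (g k)). assert (1 <= (INR k + 1) ^ 2) by nra. nra.
Qed.

Lemma quad_growth_const a : quad_growth (fun _ => a).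
Proof. apply quad_growth_of_bounded with (Rabs a). intros; lra. Qed.

Lemma quad_growth_INR : quad_growth INR.
Proof. exists 1. intros k. pose proof (pos_INR k). rewrite Rabs_pos_eq by lra. nra. Qed.

Lemma quad_growth_lin a b g h : quad_growth g -> quad_growth h ->
  quad_growth (fun k => a * g k + b * h k).
Proof.
  intros [C HC] [D HD]. exists (Rabs a * C + Rabs b * D). intros k.
  eapply Rle_trans; [apply Rabs_triang |]. rewrite !Rabs_mult.
  pose proof (Rmult_le_compat_l _ _ _ (Rabs_pos a) (HC k)).
  pose proof (Rmult_le_compat_l _ _ _ (Rabs_pos b) (HD k)). nra.
Qed.

Lemma quad_growth_shift g : quad_growth g -> quad_growth (fun k => g (S k)).
Proof.
  intros [C HC]. exists (4 * Rabs C). intros k.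
  eapply Rle_trans; [apply HC |]. rewrite S_INR. pose proof (pos_INR k).
  pose proof (Rle_abs C). pose proof (Rabs_pos C).
  assert ((INR k + 1 + 1) ^ 2 <= 4 * (INR k + 1) ^ 2) by nra. nra.
Qed.

Lemma quad_growth_delta g : quad_growth g -> quad_growth (delta g).
Proof.
  intros Hg. destruct (quad_growth_lin 1 (-1) _ _ (quad_growth_shift g Hg) Hg) as [C HC].
  exists C. intros k. unfold delta. replace (g (S k) - g k) with (1 * g (S k) + -1 * g k) by ring.
  apply HC.
Qed.

Lemma CV_radius_le_of_abs_le (a b : nat -> R) :
  (forall k, Rabs (a k) <= Rabs (b k)) -> Rbar_le (CV_radius b) (CV_radius a).
Proof.
  intros Hab. apply (proj2 (CV_radius_bounded b)). intros r [M HM].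
  apply (proj1 (CV_radius_bounded a)). exists M. intros k.
  eapply Rle_trans; [| apply (HM k)]. rewrite !Rabs_mult.
  apply Rmult_le_compat_r; [apply Rabs_pos | apply Hab].
Qed.

Lemma CV_radius_quad_growth (w g : nat -> R) : (forall k, 0 <= w k) -> quad_growth g ->
  Rbar_le (CV_radius (fun k => w k * (INR k + 1) ^ 2)) (CV_radius (fun k => w k * g k)).
Proof.
  intros Hw [C HC]. set (C' := Rabs C + 1).
  rewrite <- (CV_radius_scal C') by (unfold C'; pose proof (Rabs_pos C); lra).
  apply CV_radius_le_of_abs_le. intros k. unfold PS_scal, C'.
  change (scal (Rabs C + 1) (w k * (INR k + 1) ^ 2)) with ((Rabs C + 1) * (w k * (INR k + 1) ^ 2)).
  pose proof (Hw k). pose proof (HC k). pose proof (Rle_abs C). pose proof (Rabs_pos C).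
  assert (0 <= (INR k + 1) ^ 2) by apply pow2_ge_0.
  assert (Hwsq : 0 <= w k * (INR k + 1) ^ 2) by (apply Rmult_le_pos; assumption).
  rewrite Rabs_mult, (Rabs_pos_eq (w k)), (Rabs_pos_eq (_ * (w k * _))) by
    (try apply Rmult_le_pos; lra).
  apply Rle_trans with (w k * (C * (INR k + 1) ^ 2)); [apply Rmult_le_compat_l; assumption |].
  nra.
Qed.

Lemma is_lim_seq_inv_succ : is_lim_seq (fun k => / (INR k + 1)) 0.
Proof.
  apply (is_lim_seq_inv (fun k => INR k + 1) p_infty); [| discriminate].
  apply is_lim_seq_ext with (fun k => INR (S k)); [intros; apply S_INR |].
  apply (is_lim_seq_incr_1 INR p_infty), is_lim_seq_INR.
Qed.

Lemma is_lim_seq_ratio_succ a : is_lim_seq (fun k => (a + INR k) / (INR k + 1)) 1.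
Proof.
  apply is_lim_seq_ext with (fun k => 1 + (a - 1) * / (INR k + 1)).
  { intros k. pose proof (pos_INR k). field. lra. }
  replace (Finite 1) with (Finite (1 + (a - 1) * 0)) by (f_equal; ring).
  apply is_lim_seq_plus'; [apply is_lim_seq_const |].
  apply is_lim_seq_mult'; [apply is_lim_seq_const | apply is_lim_seq_inv_succ].
Qed.

Lemma ex_series_of_CV_radius (a : nat -> R) x :
  Rbar_lt (Rabs x) (CV_radius a) -> ex_series (fun k => a k * x ^ k).
Proof. intros H. apply ex_pseries_R, CV_radius_inside, H. Qed.

Lemma quad_growth_inv_succ : quad_growth (fun k => / (INR k + 1)).
Proof.
  apply quad_growth_of_bounded with 1. intros k. pose proof (pos_INR k).
  rewrite Rabs_pos_eq by (left; apply Rinv_0_lt_compat; lra).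
  rewrite <- Rinv_1. apply Rinv_le_contravar; lra.
Qed.

Lemma quad_growth_inv_shape s : 0 < s -> quad_growth (fun k => / (s + INR k)).
Proof.
  intros Hs. apply quad_growth_of_bounded with (/ s). intros k. pose proof (pos_INR k).
  rewrite Rabs_pos_eq by (left; apply Rinv_0_lt_compat; lra).
  apply Rinv_le_contravar; lra.
Qed.

(** * Negative binomial expectations *)

Fixpoint rising (s : R) (k : nat) : R :=
  match k with O => 1 | S k' => rising s k' * (s + INR k') end.

(* nbcoef s k = binom(s+k-1, k) = (-1)^k binom(-s, k) *)
Definition nbcoef (s : R) (k : nat) : R := rising s k / INR (fact k).

Lemma rising_pos s k : 0 < s -> 0 < rising s k.
Proof. intros Hs. induction k as [| k IH]; simpl; [lra |]. pose proof (pos_INR k). nra. Qed.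

Lemma rising_S_l s k : rising s (S k) = s * rising (s + 1) k.
Proof.
  induction k as [| k IH]; [simpl; ring |].
  change (rising s (S (S k))) with (rising s (S k) * (s + INR (S k))).
  rewrite IH, S_INR. simpl. ring.
Qed.

Lemma nbcoef_pos s k : 0 < s -> 0 < nbcoef s k.
Proof. intros Hs. apply Rdiv_lt_0_compat; [apply rising_pos, Hs | apply INR_fact_lt_0]. Qed.

Lemma nbcoef_0 s : nbcoef s 0 = 1.
Proof. unfold nbcoef. simpl. field. Qed.

Lemma nbcoef_S s k : nbcoef s (S k) = nbcoef s k * (s + INR k) / (INR k + 1).
Proof.
  unfold nbcoef. rewrite fact_simpl, mult_INR, S_INR. simpl rising.
  pose proof (INR_fact_lt_0 k). pose proof (pos_INR k). field. lra.
Qed.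

Lemma nbcoef_S_l s k : (INR k + 1) * nbcoef s (S k) = s * nbcoef (s + 1) k.
Proof.
  unfold nbcoef. rewrite rising_S_l, fact_simpl, mult_INR, S_INR.
  pose proof (INR_fact_lt_0 k). pose proof (pos_INR k). field. lra.
Qed.

Lemma nbcoef_succ s k : s * nbcoef (s + 1) k = nbcoef s k * (s + INR k).
Proof.
  rewrite <- nbcoef_S_l, nbcoef_S. pose proof (pos_INR k). field. lra.
Qed.

Lemma nbcoef_pascal s k : nbcoef s (S k) = nbcoef (s + 1) (S k) - nbcoef (s + 1) k.
Proof.
  pose proof (pos_INR k).
  apply Rmult_eq_reg_l with (INR k + 1); [| lra].
  rewrite nbcoef_S_l, (nbcoef_S (s + 1)). field. lra.
Qed.

Lemma CV_radius_nbcoef_quad s : 0 < s ->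
  CV_radius (fun k => nbcoef s k * (INR k + 1) ^ 2) = 1.
Proof.
  intros Hs. rewrite <- Rinv_1. apply CV_radius_finite_DAlembert; [| lra |].
  - intros k. pose proof (nbcoef_pos s k Hs). pose proof (pos_INR k).
    apply Rmult_integral_contrapositive; split; [lra | apply pow_nonzero; lra].
  - apply is_lim_seq_ext with
      (fun k => (s + INR k) / (INR k + 1) * ((2 + INR k) / (INR k + 1) * ((2 + INR k) / (INR k + 1)))).
    + intros k. rewrite nbcoef_S, S_INR. pose proof (nbcoef_pos s k Hs). pose proof (pos_INR k).
      rewrite Rabs_pos_eq.
      * field. split; lra.
      * apply Rle_mult_inv_pos; [| apply Rmult_lt_0_compat; [lra | apply pow_lt; lra]].
        apply Rmult_le_pos; [apply Rle_mult_inv_pos; nra | apply pow2_ge_0].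
    + replace (Finite 1) with (Finite (1 * (1 * 1))) by (f_equal; ring).
      apply is_lim_seq_mult'; [| apply is_lim_seq_mult']; apply is_lim_seq_ratio_succ.
Qed.

Definition nb_series (s : R) (g : nat -> R) (q : R) : R :=
  PSeries (fun k => nbcoef s k * g k) q.

Lemma nb_series_radius s g q : 0 < s -> quad_growth g -> Rabs q < 1 ->
  Rbar_lt (Rabs q) (CV_radius (fun k => nbcoef s k * g k)).
Proof.
  intros Hs Hg Hq. eapply Rbar_lt_le_trans; [| apply CV_radius_quad_growth; [| exact Hg]].
  - rewrite CV_radius_nbcoef_quad by exact Hs. exact Hq.
  - intros k. left. apply nbcoef_pos, Hs.
Qed.

Lemma ex_series_nb s g q : 0 < s -> quad_growth g -> Rabs q < 1 ->
  ex_series (fun k => nbcoef s k * g k * q ^ k).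
Proof. intros Hs Hg Hq. apply ex_series_of_CV_radius, nb_series_radius; assumption. Qed.

Lemma nb_series_lin s a b g h q : 0 < s -> quad_growth g -> quad_growth h -> Rabs q < 1 ->
  nb_series s (fun k => a * g k + b * h k) q = a * nb_series s g q + b * nb_series s h q.
Proof.
  intros Hs Hg Hh Hq. unfold nb_series, PSeries.
  rewrite (Series_ext _ (fun k => a * (nbcoef s k * g k * q ^ k) + b * (nbcoef s k * h k * q ^ k)))
    by (intros; ring).
  rewrite Series_plus, !Series_scal_l; [reflexivity | |].
  - exact (ex_series_scal_l a _ (ex_series_nb s g q Hs Hg Hq)).
  - exact (ex_series_scal_l b _ (ex_series_nb s h q Hs Hh Hq)).
Qed.

Lemma is_derive_nb_series s g q : 0 < s -> quad_growth g -> Rabs q < 1 ->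
  is_derive (nb_series s g) q (s * nb_series (s + 1) (fun k => g (S k)) q).
Proof.
  intros Hs Hg Hq. unfold nb_series. rewrite <- PSeries_scal.
  rewrite (PSeries_ext (PS_scal s _) (PS_derive (fun k => nbcoef s k * g k))).
  - apply is_derive_PSeries, nb_series_radius; assumption.
  - intros k. unfold PS_derive, PS_scal. rewrite S_INR.
    change (scal s (nbcoef (s + 1) k * g (S k))) with (s * (nbcoef (s + 1) k * g (S k))).
    rewrite <- (Rmult_assoc (INR k + 1)), nbcoef_S_l. ring.
Qed.

(* Pascal's rule b_s(k) = b_{s+1}(k) - b_{s+1}(k-1), summed against g(k) q^k. *)
Lemma nb_series_pascal s g q : 0 < s -> quad_growth g -> Rabs q < 1 ->
  nb_series s g q = nb_series (s + 1) g q - q * nb_series (s + 1) (fun k => g (S k)) q.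
Proof.
  intros Hs Hg Hq. unfold nb_series. rewrite <- PSeries_incr_1.
  enough (E : PSeries (PS_incr_1 (fun k => nbcoef (s + 1) k * g (S k))) q =
              PSeries (fun k => nbcoef (s + 1) k * g k) q - PSeries (fun k => nbcoef s k * g k) q)
    by (rewrite E; ring).
  unfold PSeries. rewrite <- Series_minus by (apply ex_series_nb; auto; lra).
  apply Series_ext. intros k. unfold PS_incr_1. destruct k as [| k].
  - rewrite !nbcoef_0. change (zero : R) with 0. simpl. ring.
  - rewrite (nbcoef_pascal s k). simpl. ring.
Qed.

Lemma nb_series_delta s g q : 0 < s -> quad_growth g -> Rabs q < 1 ->
  nb_series s (delta g) q = nb_series s (fun k => g (S k)) q - nb_series s g q.
Proof.
  intros Hs Hg Hq. transitivity (nb_series s (fun k => 1 * g (S k) + -1 * g k) q).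
  - unfold nb_series, delta. apply PSeries_ext. intros k. ring.
  - rewrite nb_series_lin by (try apply quad_growth_shift; assumption). ring.
Qed.

Definition nbprob (u : R) : R := u / (1 + u).

(* The expectation of g under the negative binomial law p_k = (1+u)^(-s) nbcoef s k q^k,
   q = u/(1+u).  Statements allow -1/2 < u, where |q| < 1, so that derivatives exist at u = 0. *)
Definition nb_expect (s : R) (g : nat -> R) (u : R) : R :=
  Rpower (1 + u) (- s) * nb_series s g (nbprob u).

Lemma Rabs_nbprob_lt_1 u : -1/2 < u -> Rabs (nbprob u) < 1.
Proof.
  intros Hu. unfold nbprob. rewrite Rabs_div, (Rabs_pos_eq (1 + u)) by lra.
  apply Rlt_div_l; [lra |]. apply Rabs_def1; lra.
Qed.

Lemma is_derive_nb_expect s g u : 0 < s -> quad_growth g -> -1/2 < u ->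
  is_derive (nb_expect s g) u (s * nb_expect (s + 1) (delta g) u).
Proof.
  intros Hs Hg Hu. assert (Hq : Rabs (nbprob u) < 1) by (apply Rabs_nbprob_lt_1, Hu).
  assert (Hpow : is_derive (fun v => Rpower (1 + v) (- s)) u (- s * Rpower (1 + u) (- s) / (1 + u))).
  { unfold Rpower. auto_derive; [lra | field; lra]. }
  assert (Hser : is_derive (fun v => nb_series s g (nbprob v)) u
            (/ (1 + u) ^ 2 * (s * nb_series (s + 1) (fun k => g (S k)) (nbprob u)))).
  { apply (is_derive_comp (nb_series s g) nbprob).
    - apply is_derive_nb_series; assumption.
    - unfold nbprob. auto_derive; [lra | field; lra]. }
  enough (E : - s * Rpower (1 + u) (- s) / (1 + u) * nb_series s g (nbprob u) +
              Rpower (1 + u) (- s) * (/ (1 + u) ^ 2 * (s * nb_series (s + 1) (fun k => g (S k)) (nbprob u)))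
              = s * nb_expect (s + 1) (delta g) u)
    by (rewrite <- E; apply (is_derive_Rmult _ _ u _ _ Hpow Hser)).
  unfold nb_expect.
  rewrite nb_series_delta, (nb_series_pascal s g), Rpower_opp_succ by (auto; lra).
  unfold nbprob. field. lra.
Qed.

Lemma nb_expect_0 s g : nb_expect s g 0 = g 0%nat.
Proof.
  unfold nb_expect, nb_series, nbprob, Rpower, Rdiv.
  rewrite Rplus_0_r, ln_1, Rmult_0_r, exp_0, Rmult_0_l, PSeries_0, nbcoef_0. ring.
Qed.

Lemma nb_expect_ext s g h u : (forall k, g k = h k) -> nb_expect s g u = nb_expect s h u.
Proof.
  intros E. unfold nb_expect, nb_series. f_equal. apply PSeries_ext. intros k. rewrite E. reflexivity.
Qed.

Lemma nb_expect_zero s u : nb_expect s (fun _ => 0) u = 0.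
Proof.
  unfold nb_expect, nb_series. rewrite (PSeries_ext _ (fun _ => 0)) by (intros; ring).
  rewrite PSeries_const_0. ring.
Qed.

Lemma nb_expect_lin s a b g h u : 0 < s -> quad_growth g -> quad_growth h -> -1/2 < u ->
  nb_expect s (fun k => a * g k + b * h k) u = a * nb_expect s g u + b * nb_expect s h u.
Proof.
  intros Hs Hg Hh Hu. unfold nb_expect.
  rewrite nb_series_lin by (try apply Rabs_nbprob_lt_1; assumption). ring.
Qed.

Lemma nb_expect_nonneg s g u : 0 < s -> quad_growth g -> 0 <= u ->
  (forall k, 0 <= g k) -> 0 <= nb_expect s g u.
Proof.
  intros Hs Hg Hu Hpos. unfold nb_expect, nb_series.
  apply Rmult_le_pos; [left; apply exp_pos |].
  rewrite <- (PSeries_const_0 (nbprob u)). apply Series_le.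
  - intros k. rewrite Rmult_0_l. split; [lra |].
    pose proof (nbcoef_pos s k Hs). pose proof (Hpos k).
    assert (0 <= nbprob u) by (apply Rdiv_le_0_compat; lra).
    apply Rmult_le_pos; [apply Rmult_le_pos; lra | apply pow_le; lra].
  - apply ex_series_nb; [| | apply Rabs_nbprob_lt_1]; (assumption || lra).
Qed.

Lemma nb_expect_le s g h u : 0 < s -> quad_growth g -> quad_growth h -> 0 <= u ->
  (forall k, g k <= h k) -> nb_expect s g u <= nb_expect s h u.
Proof.
  intros Hs Hg Hh Hu Hgh.
  assert (H : 0 <= nb_expect s (fun k => 1 * h k + -1 * g k) u).
  { apply nb_expect_nonneg; [| apply quad_growth_lin | |]; try assumption.
    intros k. specialize (Hgh k). lra. }
  rewrite nb_expect_lin in H by (assumption || lra). lra.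
Qed.

Lemma nb_expect_one s u : 0 < s -> 0 <= u -> nb_expect s (fun _ => 1) u = 1.
Proof.
  intros Hs Hu. rewrite (affine_of_is_derive_const _ 0 u Hu), nb_expect_0; [ring |].
  intros x Hx.
  pose proof (is_derive_nb_expect s (fun _ => 1) x Hs (quad_growth_const 1) ltac:(lra)) as H.
  rewrite (nb_expect_ext _ _ (fun _ => 0)), nb_expect_zero, Rmult_0_r in H
    by (intros; unfold delta; ring).
  exact H.
Qed.

Lemma nb_expect_INR s u : 0 < s -> 0 <= u -> nb_expect s INR u = s * u.
Proof.
  intros Hs Hu. rewrite (affine_of_is_derive_const _ s u Hu), nb_expect_0; [simpl; ring |].
  intros x Hx. pose proof (is_derive_nb_expect s INR x Hs quad_growth_INR ltac:(lra)) as H.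
  rewrite (nb_expect_ext _ _ (fun _ => 1)), nb_expect_one, Rmult_1_r in H
    by (unfold delta; intros; rewrite ?S_INR; (ring || lra)).
  exact H.
Qed.

Lemma nb_series_nbcoef s u : 0 < s -> 0 <= u -> PSeries (nbcoef s) (nbprob u) = Rpower (1 + u) s.
Proof.
  intros Hs Hu. pose proof (nb_expect_one s u Hs Hu) as H. unfold nb_expect, nb_series in H.
  rewrite (PSeries_ext _ (nbcoef s)), Rpower_Ropp in H by (intros; ring).
  pose proof (exp_pos (s * ln (1 + u))). unfold Rpower in *.
  apply (Rmult_eq_compat_l (exp (s * ln (1 + u)))) in H. field_simplify in H; lra.
Qed.

(* nbcoef (s+1) k / (k+1) = nbcoef s (k+1) / s, so the series is ((1+u)^s - 1)/(s q). *)
Lemma nb_expect_inv_succ_le s u : 0 < s -> 0 < u ->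
  nb_expect (s + 1) (fun k => / (INR k + 1)) u <= / (s * u).
Proof.
  intros Hs Hu. unfold nb_expect, nb_series.
  assert (Hq : 0 < nbprob u) by (apply Rdiv_lt_0_compat; lra).
  rewrite (PSeries_ext _ (PS_scal (/ s) (PS_decr_1 (nbcoef s)))), PSeries_scal.
  2:{ intros k. unfold PS_scal, PS_decr_1. change (scal (/ s) (nbcoef s (S k))) with (/ s * nbcoef s (S k)).
      pose proof (nbcoef_S_l s k). pose proof (pos_INR k).
      apply Rmult_eq_reg_l with (s * (INR k + 1)); [| nra]. field_simplify; [| lra | lra]. nra. }
  assert (Hex : ex_pseries (nbcoef s) (nbprob u)).
  { apply ex_pseries_R. apply (ex_series_ext (fun k => nbcoef s k * 1 * nbprob u ^ k)).
    { intros k. rewrite Rmult_1_r. reflexivity. }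
    apply ex_series_nb; [exact Hs | apply quad_growth_const | apply Rabs_nbprob_lt_1; lra]. }
  pose proof (PSeries_decr_1 _ _ Hex) as Hdecr.
  rewrite nb_series_nbcoef, nbcoef_0 in Hdecr by lra.
  set (P := PSeries (PS_decr_1 (nbcoef s)) (nbprob u)) in *.
  set (A := Rpower (1 + u) s) in *.
  assert (HA : 0 < A) by apply exp_pos.
  rewrite Rpower_opp_succ, Rpower_Ropp by lra. fold A.
  replace (/ A / (1 + u) * (/ s * P)) with ((1 - / A) / (s * u)).
  - unfold Rdiv. rewrite <- (Rmult_1_l (/ (s * u))) at 2.
    apply Rmult_le_compat_r; [left; apply Rinv_0_lt_compat; nra |].
    pose proof (Rinv_0_lt_compat A HA). lra.
  - assert (HP : P = (A - 1) * (1 + u) / u) by (rewrite Hdecr; unfold nbprob; field; lra).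
    rewrite HP. field. repeat split; lra.
Qed.

Lemma nb_expect_inv_shape s u : 0 < s -> 0 <= u ->
  nb_expect (s + 1) (fun k => / (s + INR k)) u = / (s * (1 + u)).
Proof.
  intros Hs Hu. unfold nb_expect, nb_series.
  rewrite (PSeries_ext _ (PS_scal (/ s) (nbcoef s))).
  - rewrite PSeries_scal, nb_series_nbcoef, Rpower_opp_succ, Rpower_Ropp by lra.
    pose proof (exp_pos (s * ln (1 + u))). unfold Rpower. field. repeat split; lra.
  - intros k. unfold PS_scal. change (scal (/ s) (nbcoef s k)) with (/ s * nbcoef s k).
    pose proof (nbcoef_succ s k). pose proof (pos_INR k).
    apply Rmult_eq_reg_l with (s * (s + INR k)); [| nra]. field_simplify; [| lra | lra]. nra.
Qed.

Lemma is_series_nb_expect s g u : 0 < s -> quad_growth g -> 0 <= u ->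
  is_series (fun k => Rpower (1 + u) (- s) * (nbcoef s k * g k * nbprob u ^ k)) (nb_expect s g u).
Proof.
  intros Hs Hg Hu.
  exact (is_series_scal_l _ _ _ (Series_correct _
           (ex_series_nb s g (nbprob u) Hs Hg ltac:(apply Rabs_nbprob_lt_1; lra)))).
Qed.

(** * Poisson expectations *)

Lemma CV_radius_inv_fact_quad : CV_radius (fun k => / INR (fact k) * (INR k + 1) ^ 2) = p_infty.
Proof.
  apply CV_radius_infinite_DAlembert.
  - intros k. pose proof (INR_fact_lt_0 k). pose proof (pos_INR k).
    apply Rmult_integral_contrapositive; split; [apply Rinv_neq_0_compat; lra | apply pow_nonzero; lra].
  - apply is_lim_seq_ext with
      (fun k => (2 + INR k) / (INR k + 1) * ((2 + INR k) / (INR k + 1)) * / (INR k + 1)).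
    + intros k. rewrite fact_simpl, mult_INR, !S_INR. pose proof (INR_fact_lt_0 k). pose proof (pos_INR k).
      rewrite Rabs_pos_eq.
      * field. repeat split; lra.
      * apply Rle_mult_inv_pos.
        -- apply Rmult_le_pos; [left; apply Rinv_0_lt_compat; nra | apply pow2_ge_0].
        -- apply Rmult_lt_0_compat; [apply Rinv_0_lt_compat | apply pow_lt]; lra.
    + replace (Finite 0) with (Finite (1 * 1 * 0)) by (f_equal; ring).
      apply is_lim_seq_mult'; [apply is_lim_seq_mult'; apply is_lim_seq_ratio_succ | apply is_lim_seq_inv_succ].
Qed.

Definition poisson_series (g : nat -> R) (l : R) : R :=
  PSeries (fun k => / INR (fact k) * g k) l.

Lemma poisson_series_radius g l : quad_growth g ->
  Rbar_lt (Rabs l) (CV_radius (fun k => / INR (fact k) * g k)).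
Proof.
  intros Hg. apply Rbar_lt_le_trans with (CV_radius (fun k => / INR (fact k) * (INR k + 1) ^ 2)).
  - rewrite CV_radius_inv_fact_quad. exact I.
  - apply (CV_radius_quad_growth (fun k => / INR (fact k))); [| exact Hg].
    intros k. left. apply Rinv_0_lt_compat, INR_fact_lt_0.
Qed.

Lemma ex_series_poisson g l : quad_growth g -> ex_series (fun k => / INR (fact k) * g k * l ^ k).
Proof. intros Hg. apply ex_series_of_CV_radius, poisson_series_radius, Hg. Qed.

Lemma poisson_series_lin a b g h l : quad_growth g -> quad_growth h ->
  poisson_series (fun k => a * g k + b * h k) l = a * poisson_series g l + b * poisson_series h l.
Proof.
  intros Hg Hh. unfold poisson_series, PSeries.
  rewrite (Series_ext _ (fun k => a * (/ INR (fact k) * g k * l ^ k) + b * (/ INR (fact k) * h k * l ^ k)))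
    by (intros; ring).
  rewrite Series_plus, !Series_scal_l; [reflexivity | |].
  - exact (ex_series_scal_l a _ (ex_series_poisson g l Hg)).
  - exact (ex_series_scal_l b _ (ex_series_poisson h l Hh)).
Qed.

Lemma is_derive_poisson_series g l : quad_growth g ->
  is_derive (poisson_series g) l (poisson_series (fun k => g (S k)) l).
Proof.
  intros Hg. unfold poisson_series.
  rewrite (PSeries_ext _ (PS_derive (fun k => / INR (fact k) * g k))).
  - apply is_derive_PSeries, poisson_series_radius, Hg.
  - intros k. unfold PS_derive. rewrite fact_simpl, mult_INR, S_INR.
    pose proof (INR_fact_lt_0 k). pose proof (pos_INR k). field. lra.
Qed.

Definition poisson_expect (g : nat -> R) (l : R) : R := exp (- l) * poisson_series g l.

Lemma is_derive_poisson_expect g l : quad_growth g ->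
  is_derive (poisson_expect g) l (poisson_expect (delta g) l).
Proof.
  intros Hg.
  assert (Hexp : is_derive (fun x => exp (- x)) l (- exp (- l))) by (auto_derive; [exact I | ring]).
  pose proof (is_derive_Rmult _ _ l _ _ Hexp (is_derive_poisson_series g l Hg)) as H.
  unfold poisson_expect. replace (poisson_series (delta g) l) with
    (1 * poisson_series (fun k => g (S k)) l + -1 * poisson_series g l).
  - replace (exp (- l) * (1 * poisson_series (fun k => g (S k)) l + -1 * poisson_series g l)) with
      (- exp (- l) * poisson_series g l + exp (- l) * poisson_series (fun k => g (S k)) l) by ring.
    exact H.
  - rewrite <- poisson_series_lin by (try apply quad_growth_shift; assumption).
    unfold poisson_series, delta. apply PSeries_ext. intros k. ring.
Qed.

Lemma poisson_expect_0 g : poisson_expect g 0 = g 0%nat.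
Proof. unfold poisson_expect, poisson_series. rewrite Ropp_0, exp_0, PSeries_0. simpl. field. Qed.

Lemma poisson_expect_ext g h l : (forall k, g k = h k) -> poisson_expect g l = poisson_expect h l.
Proof.
  intros E. unfold poisson_expect, poisson_series. f_equal. apply PSeries_ext.
  intros k. rewrite E. reflexivity.
Qed.

Lemma poisson_expect_zero l : poisson_expect (fun _ => 0) l = 0.
Proof.
  unfold poisson_expect, poisson_series. rewrite (PSeries_ext _ (fun _ => 0)) by (intros; ring).
  rewrite PSeries_const_0. ring.
Qed.

Lemma poisson_expect_lin a b g h l : quad_growth g -> quad_growth h ->
  poisson_expect (fun k => a * g k + b * h k) l = a * poisson_expect g l + b * poisson_expect h l.
Proof. intros Hg Hh. unfold poisson_expect. rewrite poisson_series_lin by assumption. ring. Qed.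

Lemma poisson_expect_le g h l : quad_growth g -> quad_growth h -> 0 <= l ->
  (forall k, g k <= h k) -> poisson_expect g l <= poisson_expect h l.
Proof.
  intros Hg Hh Hl Hgh.
  assert (H : 0 <= poisson_expect (fun k => 1 * h k + -1 * g k) l).
  { unfold poisson_expect, poisson_series. apply Rmult_le_pos; [left; apply exp_pos |].
    rewrite <- (PSeries_const_0 l). apply Series_le.
    - intros k. rewrite Rmult_0_l. split; [lra |]. pose proof (Hgh k).
      pose proof (Rinv_0_lt_compat _ (INR_fact_lt_0 k)).
      apply Rmult_le_pos; [apply Rmult_le_pos | apply pow_le]; lra.
    - apply ex_series_poisson, quad_growth_lin; assumption. }
  rewrite poisson_expect_lin in H by assumption. lra.
Qed.

Lemma poisson_expect_one l : 0 <= l -> poisson_expect (fun _ => 1) l = 1.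
Proof.
  intros Hl. rewrite (affine_of_is_derive_const _ 0 l Hl), poisson_expect_0; [ring |].
  intros x Hx. pose proof (is_derive_poisson_expect (fun _ => 1) x (quad_growth_const 1)) as H.
  rewrite (poisson_expect_ext _ (fun _ => 0)), poisson_expect_zero in H by (intros; unfold delta; ring).
  exact H.
Qed.

Lemma poisson_expect_INR l : 0 <= l -> poisson_expect INR l = l.
Proof.
  intros Hl. rewrite (affine_of_is_derive_const _ 1 l Hl), poisson_expect_0; [simpl; ring |].
  intros x Hx. pose proof (is_derive_poisson_expect INR x quad_growth_INR) as H.
  rewrite (poisson_expect_ext _ (fun _ => 1)), poisson_expect_one in H
    by (unfold delta; intros; rewrite ?S_INR; (ring || lra)).
  exact H.
Qed.

Lemma poisson_expect_inv_succ l : 0 < l -> l * poisson_expect (fun k => / (INR k + 1)) l = 1 - exp (- l).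
Proof.
  intros Hl. unfold poisson_expect, poisson_series.
  rewrite (PSeries_ext _ (PS_decr_1 (fun k => / INR (fact k)))).
  2:{ intros k. unfold PS_decr_1. rewrite fact_simpl, mult_INR, S_INR.
      pose proof (INR_fact_lt_0 k). pose proof (pos_INR k). field. lra. }
  assert (Hex : ex_pseries (fun k => / INR (fact k)) l).
  { apply ex_pseries_R. apply (ex_series_ext (fun k => / INR (fact k) * 1 * l ^ k)).
    { intros k. rewrite Rmult_1_r. reflexivity. }
    apply ex_series_poisson, quad_growth_const. }
  pose proof (PSeries_decr_1 _ _ Hex) as Hdecr. simpl in Hdecr.
  assert (Hone : exp (- l) * PSeries (fun k => / INR (fact k)) l = 1).
  { rewrite <- (poisson_expect_one l) by lra. unfold poisson_expect, poisson_series.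
    f_equal. apply PSeries_ext. intros k. ring. }
  rewrite Hdecr in Hone. rewrite Rinv_1 in Hone. lra.
Qed.

Lemma is_series_poisson_expect g l : quad_growth g ->
  is_series (fun k => exp (- l) * (/ INR (fact k) * g k * l ^ k)) (poisson_expect g l).
Proof.
  intros Hg. exact (is_series_scal_l _ _ _ (Series_correct _ (ex_series_poisson g l Hg))).
Qed.

(** * Entropy of the negative binomial and Poisson laws *)

Definition neglog_nbcoef (r : R) (k : nat) : R := - ln (nbcoef r k).

Lemma delta_neglog_nbcoef r k : 0 < r ->
  delta (neglog_nbcoef r) k = ln (INR k + 1) - ln (r + INR k).
Proof.
  intros Hr. unfold delta, neglog_nbcoef. rewrite nbcoef_S.
  pose proof (pos_INR k). pose proof (nbcoef_pos r k Hr).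
  rewrite (ln_div (nbcoef r k * (r + INR k))), ln_mult by nra.
  ring.
Qed.

Lemma quad_growth_neglog_nbcoef r : 1 <= r -> quad_growth (neglog_nbcoef r).
Proof.
  intros Hr. exists r. intros k. unfold neglog_nbcoef. rewrite Rabs_Ropp.
  assert (Hb : 0 <= ln (nbcoef r k) <= r * INR k).
  { induction k as [| k IH].
    - rewrite nbcoef_0, ln_1. simpl. lra.
    - pose proof (delta_neglog_nbcoef r k ltac:(lra)) as E. unfold delta, neglog_nbcoef in E.
      pose proof (pos_INR k). rewrite S_INR.
      assert (ln (INR k + 1) <= ln (r + INR k)) by (apply ln_le; lra).
      assert (ln (r + INR k) - ln (INR k + 1) <= r).
      { eapply Rle_trans; [apply ln_sub_ln_le; lra |].
        apply Rle_trans with ((r + INR k) / (INR k + 1)); [lra |].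
        apply Rle_div_l; [lra | nra]. }
      lra. }
  rewrite Rabs_pos_eq by lra. pose proof (pos_INR k). nra.
Qed.

Lemma delta_neglog_nbcoef_ge r u k : 0 < r -> 0 < u ->
  (1 - nbprob u - (ln (1 + u) - ln u)) * 1 + - (nbprob u * (r - 1)) * / (INR k + 1)
  <= delta (neglog_nbcoef r) k.
Proof.
  intros Hr Hu. rewrite delta_neglog_nbcoef by exact Hr. pose proof (pos_INR k).
  pose proof (ln_sub_ln_le (u * (r + INR k)) ((1 + u) * (INR k + 1))
    ltac:(apply Rmult_lt_0_compat; lra) ltac:(apply Rmult_lt_0_compat; lra)) as Hln.
  rewrite !ln_mult in Hln by lra.
  replace (u * (r + INR k) / ((1 + u) * (INR k + 1))) with
    (nbprob u + nbprob u * (r - 1) * / (INR k + 1)) in Hln by (unfold nbprob; field; lra).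
  lra.
Qed.

Lemma delta2_neglog_nbcoef_le r k : 0 < r ->
  delta (delta (neglog_nbcoef r)) k <= 1 * / (INR k + 1) + -1 * / (r + 1 + INR k).
Proof.
  intros Hr. unfold delta at 1. rewrite !delta_neglog_nbcoef, S_INR by exact Hr. pose proof (pos_INR k).
  pose proof (ln_sub_ln_le (INR k + 1 + 1) (INR k + 1) ltac:(lra) ltac:(lra)) as Hup.
  pose proof (ln_sub_ln_le (r + INR k) (r + (INR k + 1)) ltac:(lra) ltac:(lra)) as Hdown.
  replace ((INR k + 1 + 1) / (INR k + 1) - 1) with (/ (INR k + 1)) in Hup by (field; lra).
  replace ((r + INR k) / (r + (INR k + 1)) - 1) with (- / (r + 1 + INR k)) in Hdown by (field; lra).
  lra.
Qed.

Definition nb_entropy (r u : R) : R :=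
  nb_expect r (neglog_nbcoef r) u + (r * ((1 + u) * ln (1 + u)) - r * (u * ln u)).

Definition nb_entropy_deriv (r u : R) : R :=
  r * nb_expect (r + 1) (delta (neglog_nbcoef r)) u + r * (ln (1 + u) - ln u).

Definition nb_entropy_deriv2 (r u : R) : R :=
  r * ((r + 1) * nb_expect (r + 1 + 1) (delta (delta (neglog_nbcoef r))) u) + r * (/ (1 + u) - / u).

Lemma is_derive_nb_entropy r u : 1 < r -> 0 < u -> is_derive (nb_entropy r) u (nb_entropy_deriv r u).
Proof.
  intros Hr Hu. unfold nb_entropy, nb_entropy_deriv.
  apply (is_derive_plus (nb_expect r (neglog_nbcoef r))).
  - apply is_derive_nb_expect; [lra | apply quad_growth_neglog_nbcoef; lra | lra].
  - auto_derive; [lra | field; lra].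
Qed.

Lemma is_derive_nb_entropy_deriv r u : 1 < r -> 0 < u ->
  is_derive (nb_entropy_deriv r) u (nb_entropy_deriv2 r u).
Proof.
  intros Hr Hu. unfold nb_entropy_deriv, nb_entropy_deriv2.
  apply (is_derive_plus (fun v => r * nb_expect (r + 1) (delta (neglog_nbcoef r)) v)).
  - apply is_derive_scal, is_derive_nb_expect; [lra | | lra].
    apply quad_growth_delta, quad_growth_neglog_nbcoef. lra.
  - auto_derive; [lra | field; lra].
Qed.

Lemma nb_entropy_deriv_pos r u : 1 < r -> 0 < u -> 0 < nb_entropy_deriv r u.
Proof.
  intros Hr Hu. unfold nb_entropy_deriv.
  set (L := ln (1 + u) - ln u). set (q := nbprob u).
  assert (Hle : nb_expect (r + 1) (fun k => (1 - q - L) * 1 + - (q * (r - 1)) * / (INR k + 1)) u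
                <= nb_expect (r + 1) (delta (neglog_nbcoef r)) u).
  { apply nb_expect_le; [lra | | | lra |].
    - apply quad_growth_lin; [apply quad_growth_const | apply quad_growth_inv_succ].
    - apply quad_growth_delta, quad_growth_neglog_nbcoef. lra.
    - intros k. apply delta_neglog_nbcoef_ge; lra. }
  rewrite nb_expect_lin, nb_expect_one in Hle
    by (try apply quad_growth_const; try apply quad_growth_inv_succ; lra).
  pose proof (nb_expect_inv_succ_le r u ltac:(lra) Hu) as Hinv.
  assert (Hq : 0 <= q * (r - 1)) by (apply Rmult_le_pos; [unfold q, nbprob; apply Rdiv_le_0_compat |]; lra).
  assert (Hbound : (1 - q) - q * (r - 1) * / (r * u) = / (r * (1 + u)))
    by (unfold q, nbprob; field; lra).
  assert (0 < / (r * (1 + u))) by (apply Rinv_0_lt_compat; nra).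
  assert (q * (r - 1) * nb_expect (r + 1) (fun k => / (INR k + 1)) u <= q * (r - 1) * / (r * u))
    by (apply Rmult_le_compat_l; assumption).
  nra.
Qed.

Lemma nb_entropy_deriv2_nonpos r u : 1 < r -> 0 < u -> nb_entropy_deriv2 r u <= 0.
Proof.
  intros Hr Hu. unfold nb_entropy_deriv2.
  assert (Hle : nb_expect (r + 1 + 1) (delta (delta (neglog_nbcoef r))) u <=
                nb_expect (r + 1 + 1) (fun k => 1 * / (INR k + 1) + -1 * / (r + 1 + INR k)) u).
  { apply nb_expect_le; [lra | | | lra |].
    - apply quad_growth_delta, quad_growth_delta, quad_growth_neglog_nbcoef. lra.
    - apply quad_growth_lin; [apply quad_growth_inv_succ | apply quad_growth_inv_shape; lra].
    - intros k. apply delta2_neglog_nbcoef_le. lra. }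
  rewrite nb_expect_lin, nb_expect_inv_shape in Hle
    by (try apply quad_growth_inv_succ; try apply quad_growth_inv_shape; lra).
  pose proof (nb_expect_inv_succ_le (r + 1) u ltac:(lra) Hu) as Hinv.
  assert (Hk : (r + 1) * nb_expect (r + 1 + 1) (delta (delta (neglog_nbcoef r))) u <= / u - / (1 + u)).
  { apply Rle_trans with ((r + 1) * (1 * / ((r + 1) * u) + -1 * / ((r + 1) * (1 + u)))).
    - apply Rmult_le_compat_l; lra.
    - right. field. lra. }
  assert (r * ((r + 1) * nb_expect (r + 1 + 1) (delta (delta (neglog_nbcoef r))) u) <= r * (/ u - / (1 + u)))
    by (apply Rmult_le_compat_l; lra).
  lra.
Qed.

Lemma continue_in_nb_entropy r : 1 < r -> continue_in (nb_entropy r) (fun u => 0 <= u) 0.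
Proof.
  intros Hr. unfold nb_entropy. apply limit_plus; [| apply limit_minus].
  - apply continue_in_Rplus_0.
    apply continuity_pt_of_is_derive with (r * nb_expect (r + 1) (delta (neglog_nbcoef r)) 0).
    apply is_derive_nb_expect; [lra | apply quad_growth_neglog_nbcoef; lra | lra].
  - apply continue_in_Rplus_0. eapply continuity_pt_of_is_derive. auto_derive; [lra | reflexivity].
  - apply limit_mul; [apply (limit_free (fun _ => r) _ 0 0) | apply continue_in_xlnx_0].
Qed.

Definition ln_fact (k : nat) : R := ln (INR (fact k)).

Lemma delta_ln_fact k : delta ln_fact k = ln (INR k + 1).
Proof.
  unfold delta, ln_fact. rewrite fact_simpl, mult_INR, S_INR.
  pose proof (INR_fact_lt_0 k). pose proof (pos_INR k). rewrite ln_mult by lra. ring.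
Qed.

Lemma quad_growth_ln_fact : quad_growth ln_fact.
Proof.
  exists 1. intros k. induction k as [| k IH].
  - unfold ln_fact. simpl. rewrite ln_1, Rabs_R0. lra.
  - pose proof (delta_ln_fact k) as E. unfold delta in E. pose proof (pos_INR k).
    assert (0 <= ln_fact k) by (unfold ln_fact; rewrite <- ln_1; apply ln_le; [lra | apply (le_INR 1), lt_O_fact]).
    assert (0 <= ln (INR k + 1)) by (rewrite <- ln_1; apply ln_le; lra).
    assert (ln (INR k + 1) <= INR k) by (pose proof (ln_le_sub_1 (INR k + 1)); lra).
    rewrite Rabs_pos_eq in * by lra. rewrite S_INR. nra.
Qed.

Definition poisson_entropy (l : R) : R := poisson_expect ln_fact l + (l - l * ln l).
Definition poisson_entropy_deriv (l : R) : R := poisson_expect (delta ln_fact) l - ln l.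
Definition poisson_entropy_deriv2 (l : R) : R := poisson_expect (delta (delta ln_fact)) l - / l.

Lemma is_derive_poisson_entropy l : 0 < l -> is_derive poisson_entropy l (poisson_entropy_deriv l).
Proof.
  intros Hl. unfold poisson_entropy, poisson_entropy_deriv. unfold Rminus at 2.
  apply (is_derive_plus (poisson_expect ln_fact)).
  - apply is_derive_poisson_expect, quad_growth_ln_fact.
  - auto_derive; [exact Hl | field; lra].
Qed.

Lemma is_derive_poisson_entropy_deriv l : 0 < l ->
  is_derive poisson_entropy_deriv l (poisson_entropy_deriv2 l).
Proof.
  intros Hl. unfold poisson_entropy_deriv, poisson_entropy_deriv2. unfold Rminus.
  apply (is_derive_plus (poisson_expect (delta ln_fact))).
  - apply is_derive_poisson_expect, quad_growth_delta, quad_growth_ln_fact.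
  - auto_derive; [exact Hl | field; lra].
Qed.

Lemma poisson_entropy_deriv_pos l : 0 < l -> 0 < poisson_entropy_deriv l.
Proof.
  intros Hl. unfold poisson_entropy_deriv.
  assert (Hle : poisson_expect (fun k => (ln l + 1) * 1 + - l * / (INR k + 1)) l
                <= poisson_expect (delta ln_fact) l).
  { apply poisson_expect_le; [| | lra |].
    - apply quad_growth_lin; [apply quad_growth_const | apply quad_growth_inv_succ].
    - apply quad_growth_delta, quad_growth_ln_fact.
    - intros k. rewrite delta_ln_fact. pose proof (pos_INR k).
      pose proof (ln_sub_ln_le l (INR k + 1) Hl ltac:(lra)) as Hln. unfold Rdiv in Hln. lra. }
  rewrite poisson_expect_lin, poisson_expect_one in Hle
    by (try apply quad_growth_const; try apply quad_growth_inv_succ; lra).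
  pose proof (poisson_expect_inv_succ l Hl). pose proof (exp_pos (- l)). lra.
Qed.

Lemma poisson_entropy_deriv2_nonpos l : 0 < l -> poisson_entropy_deriv2 l <= 0.
Proof.
  intros Hl. unfold poisson_entropy_deriv2.
  assert (Hle : poisson_expect (delta (delta ln_fact)) l <= poisson_expect (fun k => / (INR k + 1)) l).
  { apply poisson_expect_le; [| apply quad_growth_inv_succ | lra |].
    - apply quad_growth_delta, quad_growth_delta, quad_growth_ln_fact.
    - intros k. unfold delta at 1. rewrite !delta_ln_fact, S_INR. pose proof (pos_INR k).
      pose proof (ln_sub_ln_le (INR k + 1 + 1) (INR k + 1) ltac:(lra) ltac:(lra)) as Hup.
      replace ((INR k + 1 + 1) / (INR k + 1) - 1) with (/ (INR k + 1)) in Hup by (field; lra).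
      lra. }
  pose proof (poisson_expect_inv_succ l Hl). pose proof (exp_pos (- l)).
  assert (poisson_expect (fun k => / (INR k + 1)) l <= / l).
  { apply Rmult_le_reg_l with l; [exact Hl |]. rewrite Rinv_r by lra. lra. }
  lra.
Qed.

Lemma continue_in_poisson_entropy : continue_in poisson_entropy (fun l => 0 <= l) 0.
Proof.
  unfold poisson_entropy. apply limit_plus; [| apply limit_minus].
  - apply continue_in_Rplus_0, continuity_pt_of_is_derive with (poisson_expect (delta ln_fact) 0).
    apply is_derive_poisson_expect, quad_growth_ln_fact.
  - apply lim_x.
  - apply continue_in_xlnx_0.
Qed.

Lemma nb_entropy_concave r : 1 < r -> concave_on_Rplus (nb_entropy r).
Proof.
  intros Hr. apply (concave_on_Rplus_of_derive2 _ (nb_entropy_deriv r) (nb_entropy_deriv2 r)).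
  - intros u Hu. apply is_derive_nb_entropy; assumption.
  - intros u Hu. apply is_derive_nb_entropy_deriv; assumption.
  - intros u Hu. apply nb_entropy_deriv2_nonpos; assumption.
  - apply continue_in_nb_entropy, Hr.
Qed.

Lemma nb_entropy_strict_incr r : 1 < r -> strict_incr_on_Rplus (nb_entropy r).
Proof.
  intros Hr. apply (strict_incr_on_Rplus_of_derive _ (nb_entropy_deriv r)).
  - intros u Hu. apply is_derive_nb_entropy; assumption.
  - intros u Hu. apply nb_entropy_deriv_pos; assumption.
  - apply continue_in_nb_entropy, Hr.
Qed.

Lemma poisson_entropy_concave : concave_on_Rplus poisson_entropy.
Proof.
  apply (concave_on_Rplus_of_derive2 _ poisson_entropy_deriv poisson_entropy_deriv2).
  - exact is_derive_poisson_entropy.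
  - exact is_derive_poisson_entropy_deriv.
  - exact poisson_entropy_deriv2_nonpos.
  - exact continue_in_poisson_entropy.
Qed.

Lemma poisson_entropy_strict_incr : strict_incr_on_Rplus poisson_entropy.
Proof.
  apply (strict_incr_on_Rplus_of_derive _ poisson_entropy_deriv).
  - exact is_derive_poisson_entropy.
  - exact poisson_entropy_deriv_pos.
  - exact continue_in_poisson_entropy.
Qed.

(** * Identification of the Shannon entropy *)

Lemma xlogx_pos p : 0 < p -> xlogx p = p * ln p.
Proof. intros Hp. unfold xlogx. destruct (Rle_dec p 0); [lra | reflexivity]. Qed.

Lemma falling_opp r k : (-1) ^ k * falling (- r) k = rising r k.
Proof. induction k as [| k IH]; simpl; [ring |]. rewrite <- IH. ring. Qed.

Lemma p_nk_nb c n k x : 0 < c -> 0 <= x ->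
  p_nk c n k x = Rpower (1 + c * x) (- (n / c)) * (nbcoef (n / c) k * nbprob (c * x) ^ k).
Proof.
  intros Hc Hx. unfold p_nk. destruct (Rlt_dec 0 c) as [_ | H]; [| lra].
  unfold gbinom. replace (- n / c) with (- (n / c)) by (field; lra).
  set (r := n / c). set (u := c * x). assert (Hu : 0 <= u) by (unfold u; nra).
  replace (- r - INR k) with (- r + - INR k) by ring.
  rewrite Rpower_plus, (Rpower_Ropp (1 + u) (INR k)), Rpower_pow by lra.
  unfold nbprob, Rdiv. rewrite Rpow_mult_distr, pow_inv.
  unfold nbcoef. rewrite <- falling_opp.
  pose proof (INR_fact_lt_0 k). assert (0 < (1 + u) ^ k) by (apply pow_lt; lra).
  field. split; lra.
Qed.

Lemma p_nk_poisson n k x : p_nk 0 n k x = exp (- (n * x)) * (/ INR (fact k) * (n * x) ^ k).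
Proof.
  unfold p_nk. destruct (Rlt_dec 0 0) as [H | _]; [lra |].
  replace (- n * x) with (- (n * x)) by ring. unfold Rdiv. ring.
Qed.

Lemma ent_term_at_0 c n k : 0 <= c -> ent_term c n 0 k = 0.
Proof.
  intros Hc. unfold ent_term.
  assert (Hp : p_nk c n k 0 = if k then 1 else 0).
  { destruct (Rle_lt_or_eq_dec 0 c Hc) as [Hc' | <-].
    - rewrite p_nk_nb by lra. unfold nbprob, Rpower.
      rewrite !Rmult_0_r, Rplus_0_r, ln_1, Rmult_0_r, exp_0, Rdiv_0_l.
      destruct k; simpl; [rewrite nbcoef_0 |]; ring.
    - rewrite p_nk_poisson, !Rmult_0_r, Ropp_0, exp_0.
      destruct k; simpl; [field | ring]. }
  rewrite Hp. unfold xlogx. destruct k; simpl.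
  - destruct (Rle_dec 1 0); [lra |]. rewrite ln_1. ring.
  - destruct (Rle_dec 0 0); [ring | lra].
Qed.

Lemma is_series_ent_term_nb c n x : 0 < c -> c < n -> 0 <= x ->
  is_series (ent_term c n x) (nb_entropy (n / c) (c * x)).
Proof.
  intros Hc Hn Hx. assert (Hr : 1 < n / c) by (apply Rlt_div_r; lra).
  destruct (Rle_lt_or_eq_dec 0 x Hx) as [Hx' | <-].
  2:{ replace (nb_entropy (n / c) (c * 0)) with 0.
      - apply (is_series_ext_R (fun _ => 0)); [| exact is_series_zero].
        intros k. rewrite ent_term_at_0 by lra. reflexivity.
      - unfold nb_entropy, neglog_nbcoef. rewrite Rmult_0_r, nb_expect_0, nbcoef_0, Rplus_0_r, ln_1. ring. }
  set (r := n / c) in *. set (u := c * x). assert (Hu : 0 < u) by (unfold u; nra).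
  pose proof (is_series_lin3 _ _ _ _ _ _ (ln (1 + u) - ln u) (r * ln (1 + u))
    (is_series_nb_expect r (neglog_nbcoef r) u ltac:(lra) (quad_growth_neglog_nbcoef r ltac:(lra)) ltac:(lra))
    (is_series_nb_expect r INR u ltac:(lra) quad_growth_INR ltac:(lra))
    (is_series_nb_expect r (fun _ => 1) u ltac:(lra) (quad_growth_const 1) ltac:(lra))) as HS.
  rewrite nb_expect_INR, nb_expect_one in HS by lra.
  replace (nb_entropy r u) with
    (nb_expect r (neglog_nbcoef r) u + (ln (1 + u) - ln u) * (r * u) + r * ln (1 + u) * 1)
    by (unfold nb_entropy; ring).
  revert HS. apply is_series_ext_R. intros k.
  unfold ent_term. rewrite p_nk_nb by lra. fold r u.
  assert (HE : 0 < Rpower (1 + u) (- r)) by apply exp_pos.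
  assert (HB : 0 < nbcoef r k) by (apply nbcoef_pos; lra).
  assert (HQ : 0 < nbprob u) by (apply Rdiv_lt_0_compat; lra).
  assert (HQk : 0 < nbprob u ^ k) by (apply pow_lt, HQ).
  rewrite xlogx_pos by (apply Rmult_lt_0_compat; [| apply Rmult_lt_0_compat]; assumption).
  rewrite !ln_mult, ln_Rpower, ln_pow by (assumption || apply Rmult_lt_0_compat; assumption).
  unfold nbprob. rewrite ln_div by lra. unfold neglog_nbcoef. ring.
Qed.

Lemma is_series_ent_term_poisson n x : 0 < n -> 0 <= x ->
  is_series (ent_term 0 n x) (poisson_entropy (n * x)).
Proof.
  intros Hn Hx. destruct (Rle_lt_or_eq_dec 0 x Hx) as [Hx' | <-].
  2:{ replace (poisson_entropy (n * 0)) with 0.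
      - apply (is_series_ext_R (fun _ => 0)); [| exact is_series_zero].
        intros k. rewrite ent_term_at_0 by lra. reflexivity.
      - unfold poisson_entropy, ln_fact. rewrite Rmult_0_r, poisson_expect_0. simpl. rewrite ln_1. ring. }
  set (l := n * x). assert (Hl : 0 < l) by (unfold l; nra).
  pose proof (is_series_lin3 _ _ _ _ _ _ l (- ln l)
    (is_series_poisson_expect ln_fact l quad_growth_ln_fact)
    (is_series_poisson_expect (fun _ => 1) l (quad_growth_const 1))
    (is_series_poisson_expect INR l quad_growth_INR)) as HS.
  rewrite poisson_expect_INR, poisson_expect_one in HS by lra.
  replace (poisson_entropy l) with (poisson_expect ln_fact l + l * 1 + - ln l * l)
    by (unfold poisson_entropy; ring).
  revert HS. apply is_series_ext_R. intros k.
  unfold ent_term. rewrite p_nk_poisson. fold l.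
  pose proof (INR_fact_lt_0 k). assert (0 < l ^ k) by (apply pow_lt, Hl).
  assert (0 < / INR (fact k)) by (apply Rinv_0_lt_compat; assumption).
  pose proof (exp_pos (- l)).
  rewrite xlogx_pos by (repeat apply Rmult_lt_0_compat; assumption).
  rewrite !ln_mult, ln_exp, ln_Rinv, ln_pow by (assumption || apply Rmult_lt_0_compat; assumption).
  unfold ln_fact. ring.
Qed.

Theorem theorem2p1 (c n : R) (hc : 0 <= c) (hn : c < n) :
  (forall x, 0 <= x -> ex_series (ent_term c n x)) /\
  (forall x y t, 0 <= x -> 0 <= y -> 0 <= t <= 1 ->
     t * H_ent c n x + (1 - t) * H_ent c n y <= H_ent c n (t * x + (1 - t) * y)) /\
  (forall x y, 0 <= x -> x < y -> H_ent c n x < H_ent c n y).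
Proof.
  destruct (Rle_lt_or_eq_dec 0 c hc) as [Hc | <-].
  - assert (Hr : 1 < n / c) by (apply Rlt_div_r; lra).
    assert (HH : forall x, 0 <= x -> H_ent c n x = nb_entropy (n / c) (c * x))
      by (intros x Hx; apply is_series_unique, is_series_ent_term_nb; assumption).
    split; [| split].
    + intros x Hx. eexists. apply is_series_ent_term_nb; assumption.
    + exact (concave_on_Rplus_scale _ _ c Hc HH (nb_entropy_concave _ Hr)).
    + exact (strict_incr_on_Rplus_scale _ _ c Hc HH (nb_entropy_strict_incr _ Hr)).
  - assert (HH : forall x, 0 <= x -> H_ent 0 n x = poisson_entropy (n * x))
      by (intros x Hx; apply is_series_unique, is_series_ent_term_poisson; assumption).
    split; [| split].
    + intros x Hx. eexists. apply is_series_ent_term_poisson; assumption.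
    + exact (concave_on_Rplus_scale _ _ n hn HH poisson_entropy_concave).
    + exact (strict_incr_on_Rplus_scale _ _ n hn HH poisson_entropy_strict_incr).
Qed.
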